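(* For every $n\geq 0$, $$S_1(n)=10^{n},\qquad S_2(n)=\frac{35\cdot 36^{n}-2\cdot 3^{n}}{33},\qquad S_3(n)=\frac{25\cdot 136^{n}-4\cdot 10^{n}}{21}.$$
   Context: The Stern polynomials $B_n(t)\in\mathbb{Z}[t]$ are defined by $B_0(t)=0$, $B_1(t)=1$, and for $n\geq 1$: $B_{2n}(t)=tB_n(t)$, $B_{2n+1}(t)=B_n(t)+B_{n+1}(t)$. For $n\geq1$ let $e(n)=\deg B_n(t)$. For $k,n\geq 0$ let $S_k(n)=\sum_{a\geq 1:\;e(a)=n}a^{k}$ (a finite sum over the positive integers $a$ with $e(a)=n$). *)

From HB Require Import structures.
From mathcomp Require Import all_boot all_order all_algebra.
Set Implicit Arguments. Unset Strict Implicit. Unset Printing Implicit Defensive.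
Import Order.TTheory GRing.Theory Num.Theory.

Local Open Scope ring_scope.

Fixpoint stern_fuel (fuel n : nat) : {poly int} :=
  match fuel with
  | 0%N => 0
  | f.+1 =>
      if n == 0%N then 0
      else if n == 1%N then 1
      else if odd n then stern_fuel f n./2 + stern_fuel f n./2.+1
      else 'X * stern_fuel f n./2
  end.

(* fuel n.+1 is always enough *)
Definition stern (n : nat) : {poly int} := stern_fuel n.+1 n.

(* e(n) = deg B_n (for n >= 1; B_n <> 0 then) *)
Definition e (n : nat) : nat := (size (stern n)).-1.

Local Close Scope ring_scope.
(* Finiteness is witnessed by a bound N with every such a below N; the value
   of the sum over [1, N) does not depend on the choice of such N. *)
Definition S_is (k n : nat) (v : nat) : Prop :=
  exists N : nat,
    (forall a : nat, (0 < a)%N -> e a = n -> (a < N)%N) /\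
    (\sum_(1 <= a < N | e a == n) a ^ k)%N = v.

From HB Require Import structures.
From mathcomp Require Import all_boot all_order all_algebra.
From mathcomp Require Import zify.
Import Order.TTheory GRing.Theory Num.Theory.

Set Implicit Arguments.
Unset Strict Implicit.
Unset Printing Implicit Defensive.

(* The Stern polynomials have positive leading coefficients, so no cancellation
   occurs in B_{2m+1} = B_m + B_{m+1}; hence e(2m) = e(m) + 1 and
   e(2m+1) = max(e(m), e(m+1)).  By induction the degrees of consecutive
   Stern polynomials differ by at most one, which gives
   e(4b+1) = e(b) + 1 and e(4b-1) = e(b) + 1.  Consequently every a > 1 has a
   unique "parent" b with e(a) = e(b) + 1 and a in {2b, 4b-1, 4b+1}, so the
   level set {a >= 1 | e(a) = n} is the duplicate-free list [level n] obtained
   from [:: 1] by applying the three maps x |-> 2x, 4x-1, 4x+1 n times.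
   Summing the k-th powers of the three children of x gives, for k = 1, 2, 3,
   10x, 36x^2 + 2 and 136x^3 + 24x; the resulting linear recurrences for the
   power sums have the closed forms of the theorem. *)

Lemma stern_fuelE f g n :
  (n < f)%N -> (n < g)%N -> stern_fuel f n = stern_fuel g n.
Proof.
elim: f g n => [|f IH] [|g] n //= hf hg.
case: ifP => // /eqP n0; case: ifP => // /eqP n1.
have hn := odd_double_half n; rewrite -muln2 in hn.
case: ifP => ho; rewrite ho /= in hn.
- by rewrite (IH g n./2) ?(IH g n./2.+1) //; lia.
- by rewrite (IH g n./2) //; lia.
Qed.

Lemma stern_rec n : (1 < n)%N -> stern n =
  if odd n then (stern n./2 + stern n./2.+1)%R else ('X * stern n./2)%R.
Proof.
move=> n1; have hn := odd_double_half n; rewrite -muln2 in hn.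
rewrite /stern /=.
have -> : (n == 0%N) = false by apply/eqP; lia.
have -> : (n == 1%N) = false by apply/eqP; lia.
case: ifP => ho; rewrite ho /= in hn.
- by rewrite (@stern_fuelE _ n./2.+1 n./2) ?(@stern_fuelE _ n./2.+2 n./2.+1) //; lia.
- by rewrite (@stern_fuelE _ n./2.+1 n./2) //; lia.
Qed.

Lemma stern_double m : (0 < m)%N -> stern m.*2 = ('X * stern m)%R.
Proof.
by move=> m0; rewrite stern_rec ?odd_double ?doubleK //; rewrite -muln2; lia.
Qed.

Lemma stern_odd m : (0 < m)%N -> stern m.*2.+1 = (stern m + stern m.+1)%R.
Proof.
move=> m0; rewrite stern_rec /= ?odd_double /= ?uphalf_double //.
by rewrite -muln2; lia.
Qed.

Local Open Scope ring_scope.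

Lemma lead_coef_gt0D {R : numDomainType} (p q : {poly R}) :
  0 < lead_coef p -> 0 < lead_coef q ->
  0 < lead_coef (p + q) /\ size (p + q) = maxn (size p) (size q).
Proof.
move=> hp hq.
case: (ltngtP (size p) (size q)) => h.
- by rewrite lead_coefDr // addrC size_polyDl // (maxn_idPr (ltnW h)).
- by rewrite lead_coefDl // size_polyDl // (maxn_idPl (ltnW h)).
have top : (p + q)`_(size p).-1 = lead_coef p + lead_coef q.
  by rewrite coefD !lead_coefE h.
have top_gt0 : 0 < (p + q)`_(size p).-1 by rewrite top addr_gt0.
have size_pq : size (p + q) = size p.
  apply/eqP; rewrite eqn_leq; apply/andP; split.
    by have := size_polyD p q; rewrite -h maxnn.
  rewrite leqNgt; apply/negP => hlt.
  have small : (size (p + q)%R <= (size p).-1)%N by lia.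
  by move/leq_sizeP/(_ _ (leqnn _)): small => z; move: top_gt0; rewrite z ltxx.
by rewrite lead_coefE size_pq top_gt0; split => //; rewrite -h maxnn.
Qed.

Lemma stern_lead_gt0 n : (0 < n)%N -> 0 < lead_coef (stern n).
Proof.
elim/ltn_ind: n => n IH n0.
case: (ltngtP n 1) => h; first lia; last by rewrite h lead_coef1 ltr01.
have hn := odd_double_half n; rewrite -muln2 in hn.
rewrite stern_rec //; case: ifP => ho; rewrite ho /= in hn.
- by case: (lead_coef_gt0D (IH n./2 ltac:(lia) ltac:(lia))
                           (IH n./2.+1 ltac:(lia) ltac:(lia))).
- by rewrite mulrC lead_coefMX; apply: IH; lia.
Qed.

Lemma stern_neq0 n : (0 < n)%N -> stern n != 0.
Proof.
by move=> n0; apply/eqP => h; move: (stern_lead_gt0 n0); rewrite h lead_coef0 ltxx.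
Qed.

Local Close Scope ring_scope.

Lemma e1 : e 1 = 0.
Proof. by rewrite /e size_poly1. Qed.

Lemma e_double m : 0 < m -> e m.*2 = (e m).+1.
Proof.
move=> m0; rewrite /e stern_double // mulrC size_mulX ?stern_neq0 //.
by have := stern_neq0 m0; rewrite -size_poly_gt0; lia.
Qed.

Lemma e_odd m : 0 < m -> e m.*2.+1 = maxn (e m) (e m.+1).
Proof.
move=> m0; rewrite /e stern_odd //.
rewrite (lead_coef_gt0D (stern_lead_gt0 m0) (stern_lead_gt0 (ltn0Sn m))).2.
have := stern_neq0 m0; have := @stern_neq0 m.+1 (ltn0Sn m).
rewrite -!size_poly_gt0; move: (size (stern m)) (size (stern m.+1)) => s t; lia.
Qed.

Lemma e_succ_close n : 0 < n -> e n.+1 <= (e n).+1 /\ e n <= (e n.+1).+1.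
Proof.
elim/ltn_ind: n => n IH n0.
case: (ltngtP n 1) => h; first lia; last by rewrite h -[2]/(1.*2) e_double // e1.
have hn := odd_double_half n; rewrite -muln2 in hn.
set m := n./2 in hn IH *.
have [h1 h2] := IH m ltac:(lia) ltac:(lia).
case: (odd n) hn => /= hn.
- have -> : n = m.*2.+1 by rewrite -muln2; lia.
  rewrite -[m.*2.+2]/(m.+1.*2) e_double // e_odd; lia.
- have -> : n = m.*2 by rewrite -muln2; lia.
  rewrite e_double ?e_odd; lia.
Qed.

Lemma e_4p1 b : 0 < b -> e (4 * b + 1) = (e b).+1.
Proof.
move=> b0; have -> : 4 * b + 1 = (b.*2).*2.+1 by rewrite -!muln2; lia.
have [h1 h2] := e_succ_close b0.
rewrite e_odd; last by rewrite -muln2; lia.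
rewrite e_double // e_odd //; lia.
Qed.

Lemma e_4m1 b : 0 < b -> e (4 * b - 1) = (e b).+1.
Proof.
case: b => [|c] // _; have -> : 4 * c.+1 - 1 = (c.*2.+1).*2.+1 by rewrite -!muln2; lia.
rewrite e_odd // -[(c.*2.+1).+1]/(c.+1.*2) e_double //.
case: (posnP c) => [->|c0]; first by rewrite e1.
have [h1 h2] := e_succ_close c0.
rewrite e_odd //; lia.
Qed.

Lemma e_parent a : 1 < a -> exists2 b, 0 < b &
  e a = (e b).+1 /\ [\/ a = 2 * b, a = 4 * b - 1 | a = 4 * b + 1].
Proof.
move=> a1; have ha := odd_double_half a; rewrite -muln2 in ha.
set c := a./2 in ha *.
case: (odd a) ha => /= ha; last first.
  exists c; first lia; split; last by constructor 1; lia.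
  have -> : a = c.*2 by rewrite -muln2; lia.
  by rewrite e_double //; lia.
have hc := odd_double_half c; rewrite -muln2 in hc.
set b := c./2 in hc *.
case: (odd c) hc => /= hc.
- exists b.+1; first lia; split; last by constructor 2; lia.
  by rewrite -e_4m1 //; congr e; lia.
- exists b; first lia; split; last by constructor 3; lia.
  by rewrite -e_4p1; [congr e | ]; lia.
Qed.

Fixpoint level (n : nat) : seq nat :=
  if n is m.+1 then
    [seq 2 * x | x <- level m] ++ [seq 4 * x - 1 | x <- level m]
      ++ [seq 4 * x + 1 | x <- level m]
  else [:: 1].

Lemma level_bound n x : x \in level n -> 0 < x < 4 ^ n.+1.
Proof.
elim: n x => [|n IH] x /=; first by rewrite inE => /eqP ->.
by rewrite !mem_cat expnS => /or3P [] /mapP [y /IH hy ->]; lia.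
Qed.

Lemma mem_level n a : 0 < a -> (e a == n) = (a \in level n).
Proof.
elim: n a => [|n IH] a a0 /=.
  rewrite inE; apply/eqP/eqP => [ea0|->]; last exact: e1.
  case: (ltngtP a 1) => // a1; first lia.
  by have [b _ [eab _]] := e_parent a1; rewrite eab in ea0.
apply/eqP/idP => [ea|].
- case: (ltngtP a 1) => a1; first lia; last by rewrite a1 e1 in ea.
  have [b b0 [eab child]] := e_parent a1.
  have bL : b \in level n by rewrite -IH // -eqSS -eab ea.
  rewrite !mem_cat; case: child => ->.
  + by rewrite (map_f (fun x => 2 * x) bL).
  + by rewrite (map_f (fun x => 4 * x - 1) bL) orbT.
  + by rewrite (map_f (fun x => 4 * x + 1) bL) !orbT.
- rewrite !mem_cat => /or3P [] /mapP [y yL ->];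
    have /andP [y0 _] := level_bound yL; move: (yL); rewrite -IH // => /eqP <-.
  + by rewrite mulnC muln2 e_double.
  + exact: e_4m1.
  + exact: e_4p1.
Qed.

(* The three child maps are injective with pairwise disjoint images
   (residues 0, 3 and 1 modulo 4), so levels have no repetitions. *)
Lemma level_uniq n : uniq (level n).
Proof.
elim: n => [|n IH] //=.
have pos := @level_bound n.
rewrite !cat_uniq !map_inj_in_uniq ?IH ?andbT //=;
  try by move=> x y /pos hx /pos hy; lia.
apply/andP; split.
- apply/hasPn => z; rewrite mem_cat => /orP [] /mapP [y /pos hy ->];
  by apply/mapP => [[x /pos hx]]; lia.
- by apply/hasPn => z /mapP [y /pos hy ->]; apply/mapP => [[x /pos hx]]; lia.
Qed.

Definition power_sum (k n : nat) : nat := \sum_(x <- level n) x ^ k.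

Lemma S_is_power_sum k n : S_is k n (power_sum k n).
Proof.
exists (4 ^ n.+1); split.
  by move=> a a0 /eqP; rewrite (mem_level n a0) => /level_bound /andP [].
rewrite -big_filter /power_sum; apply: perm_big.
apply: uniq_perm; [by rewrite filter_uniq // iota_uniq | exact: level_uniq |].
move=> a; rewrite mem_filter mem_iota.
case: (posnP a) => [->|a0].
  by rewrite /= andbF; apply/esym/negP => /level_bound.
rewrite (mem_level n a0); apply/andP/idP => [[//]|aL]; split => //.
by have := level_bound aL; lia.
Qed.

Lemma power_sum_succ k j c d n :
  (forall x, 0 < x -> (2 * x) ^ k + (4 * x - 1) ^ k + (4 * x + 1) ^ k
                      = c * x ^ k + d * x ^ j) ->
  power_sum k n.+1 = c * power_sum k n + d * power_sum j n.
Proof.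
move=> children.
rewrite /power_sum [level n.+1]/= !big_cat !big_map /= addnA !big_distrr -!big_split /=.
by apply: eq_big_seq => x /level_bound /andP [x0 _]; rewrite children.
Qed.

Lemma power_sum0 n : power_sum 0 n = 3 ^ n.
Proof.
elim: n => [|n IH]; first by rewrite /power_sum big_seq1.
rewrite (@power_sum_succ 0 0 3 0) ?mul0n ?addn0 ?IH ?expnS //.
Qed.

Lemma power_sum1 n : power_sum 1 n = 10 ^ n.
Proof.
elim: n => [|n IH]; first by rewrite /power_sum big_seq1.
rewrite (@power_sum_succ 1 0 10 0) ?mul0n ?addn0 ?IH ?expnS // => x x0.
by rewrite !expn1; lia.
Qed.

Lemma power_sum2 n : 33 * power_sum 2 n + 2 * 3 ^ n = 35 * 36 ^ n.
Proof.
elim: n => [|n IH]; first by rewrite /power_sum big_seq1.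
rewrite (@power_sum_succ 2 0 36 2) ?power_sum0 ?expnS; first by nia.
move=> x x0; have -> : 4 * x - 1 = 4 * x.-1 + 3 by lia.
by rewrite -[in RHS](prednK x0) !expnS !expn0; nia.
Qed.

Lemma power_sum3 n : 21 * power_sum 3 n + 4 * 10 ^ n = 25 * 136 ^ n.
Proof.
elim: n => [|n IH]; first by rewrite /power_sum big_seq1.
rewrite (@power_sum_succ 3 1 136 24) ?power_sum1 ?expnS; first by nia.
move=> x x0; have -> : 4 * x - 1 = 4 * x.-1 + 3 by lia.
by rewrite -[in RHS](prednK x0) !expnS !expn0; nia.
Qed.

Lemma ratr_of_linear (d v r s : nat) :
  0 < d -> d * v + r = s -> (v%:R : rat) = ((s%:R - r%:R) / d%:R)%R.
Proof.
move=> d0 <-; rewrite natrD addrK natrM [(d%:R * _)%R]mulrC mulfK //.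
by rewrite pnatr_eq0 -lt0n.
Qed.

Theorem mainTheorem11 (n : nat) :
  S_is 1 n (10 ^ n) /\
  (exists v : nat, S_is 2 n v /\
     (v%:R : rat) = ((35 * 36 ^ n)%:R - (2 * 3 ^ n)%:R) / 33%:R)%R /\
  (exists v : nat, S_is 3 n v /\
     (v%:R : rat) = ((25 * 136 ^ n)%:R - (4 * 10 ^ n)%:R) / 21%:R)%R.
Proof.
split; first by rewrite -power_sum1; exact: S_is_power_sum.
split.
- exists (power_sum 2 n); split; first exact: S_is_power_sum.
  exact: ratr_of_linear (power_sum2 n).
- exists (power_sum 3 n); split; first exact: S_is_power_sum.
  exact: ratr_of_linear (power_sum3 n).
Qed.
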